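(* For any $M\in\mathrm{SL}(3,\mathbb R)$ we have $\mathcal G_{\mathbb S_1^1}(M)\le5$.
   Context: Here $d=2$ and $\mathbb S_1^1$ is the unit circle in $\mathbb R^2$. Elements of $\mathbb R^{3}$ are row vectors $(u,\vec v)$ with $u\in\mathbb R$, $\vec v\in\mathbb R^2$; $\mathbb Z^{3}M$ is the lattice of row vectors $\vec mM$, $\vec m\in\mathbb Z^3$. For $\mathcal D\subseteq\mathbb S_1^{1}$ and $t\in(0,1)$, $\mathcal Q_{\mathcal D}(M,t)=\{(u,\vec v)\in\mathbb Z^{3}M : -t<u<1-t,\ \vec v\in\mathbb R_{>0}\mathcal D\}$, $F_{\mathcal D}(M,t)=\min\{|\vec v| : (u,\vec v)\in\mathcal Q_{\mathcal D}(M,t)\}$, and $\mathcal G_{\mathcal D}(M)=|\{F_{\mathcal D}(M,t):0<t<1\}|$. For $\mathcal D=\mathbb S_1^1$ one has $\mathbb R_{>0}\mathcal D=\mathbb R^2\setminus\{0\}$. *)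

From HB Require Import structures.
From mathcomp Require Import all_boot all_order all_algebra.
From mathcomp Require Import all_classical all_reals.
Set Implicit Arguments. Unset Strict Implicit. Unset Printing Implicit Defensive.
Import Order.TTheory GRing.Theory Num.Theory.
Local Open Scope ring_scope.
Local Open Scope classical_set_scope.

Definition lattice (R : realType) (M : 'M[R]_3) : set 'rV[R]_3 :=
  [set x | exists m : 'rV[int]_3, x = map_mx (fun z : int => z%:~R) m *m M].

(* A row vector x = (u, v) with u = x_0 and v = (x_1, x_2) in R^2. *)
Definition ucoord (R : realType) (x : 'rV[R]_3) : R := x ord0 (inord 0).
Definition vnorm (R : realType) (x : 'rV[R]_3) : R :=
  Num.sqrt (x ord0 (inord 1) ^+ 2 + x ord0 (inord 2) ^+ 2).
Definition v_nonzero (R : realType) (x : 'rV[R]_3) : Prop :=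
  x ord0 (inord 1) <> 0 \/ x ord0 (inord 2) <> 0.

Definition Qset (R : realType) (M : 'M[R]_3) (t : R) : set 'rV[R]_3 :=
  [set x | lattice M x /\ - t < ucoord x < 1 - t /\ v_nonzero x].

Definition is_F (R : realType) (M : 'M[R]_3) (t r : R) : Prop :=
  (exists2 x, Qset M t x & vnorm x = r) /\
  (forall x, Qset M t x -> r <= vnorm x).

(* The set {F_{S^1}(M,t) : 0 < t < 1}; G_{S^1}(M) is its cardinality. *)
Definition Fvalues (R : realType) (M : 'M[R]_3) : set R :=
  [set r | exists t, 0 < t < 1 /\ is_F M t r].

(* Using the symmetry x |-> -x of the lattice, every value F(M,t) is the least
   |v| over the lattice points with 0 <= u < s and v <> 0, for some s in
   [1/2, 1).  Suppose there were six values r_0 < ... < r_5, with windows s_k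
   and minimisers w_k.  A minimiser w_j cannot lie in a later window, so
   s_k <= u(w_j) for j < k; hence w_i - w_j (i < j <= 4) lies in the window of
   r_5 and w_i + w_j - w_0 (0 < i < j) in the window of r_j.  The v-parts
   p_0, ..., p_4 are then plane vectors with |p_0| < |p_k| < r_5 <= |p_i - p_j|
   and |p_i + p_j - p_0| >= max(|p_i|, |p_j|).  The first inequalities make all
   mutual angles exceed pi/3, so two of p_1, ..., p_4 lie on opposite sides of
   p_0 at an angle less than pi containing it; for those, an explicit estimate
   gives |p_i + p_j - p_0| < max(|p_i|, |p_j|). *)

From HB Require Import structures.
From mathcomp Require Import all_boot all_order all_algebra.
From mathcomp Require Import all_classical all_reals.
From mathcomp Require Import trigo finmap.
From mathcomp Require Import ring lra zify.
Import Order.TTheory GRing.Theory Num.Theory.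
Local Open Scope ring_scope.
Set Implicit Arguments. Unset Strict Implicit. Unset Printing Implicit Defensive.

Section Plane.
Variable R : realType.
Local Notation pi := (@pi R).
Implicit Types (z w : R * R) (r θ φ : R).

Lemma cos_pi3 : cos (pi / 3) = 1 / 2.
Proof.
have pi_gt0 := pi_gt0 R.
set c := cos (pi / 3).
have c_gt0 : 0 < c by apply: cos_gt0_pihalf; apply/andP; split; lra.
(* 2 (pi / 3) = pi - pi / 3 turns the double-angle formula into 2 c^2 - 1 = - c. *)
have : cos ((pi / 3) *+ 2) = cos (- (pi / 3) + pi) by congr cos; rewrite mulr2n; field.
rewrite cos_mulr2n cosDpi cosN -/c => e.
have : (2 * c - 1) * (c + 1) == 0 by apply/eqP; rewrite mulr2n in e; lra.
by rewrite mulf_eq0 => /orP[] /eqP; lra.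
Qed.

Lemma cos_ge_half (x : R) : `|x| <= pi / 3 -> 1 / 2 <= cos x.
Proof.
move=> hx; have pi_gt0 := pi_gt0 R.
rewrite -cos_norm -cos_pi3 leNgt ltr_cos ?in_itv /= ?normr_ge0 -?leNgt //; lra.
Qed.

Lemma cos_lt_half_norm (x : R) : `|x| <= pi *+ 2 -> cos x < 1 / 2 ->
  pi / 3 < `|x| < pi * 5 / 3.
Proof.
move=> hx hc; have pi_gt0 := pi_gt0 R; rewrite mulr2n in hx.
apply/andP; split; rewrite ltNge; apply/negP => h.
  by have := cos_ge_half h; lra.
have e : cos x = cos (`|x| - pi *+ 2) by rewrite -cos_norm -[RHS]cosD2pi subrK.
rewrite e in hc; have := cos_ge_half (x := `|x| - pi *+ 2).
rewrite mulr2n ler_norml; lra.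
Qed.

Lemma four_points_spread (d : R) (x : 'I_4 -> R) :
  (forall i j, i != j -> d < `|x i - x j|) -> exists i j, 3 * d < x j - x i.
Proof.
move=> sep; apply: contrapT => /forallNP no_spread.
have le i j : x j - x i <= 3 * d.
  by rewrite leNgt; apply/negP => h; apply: (no_spread i); exists j.
have := sep 0 1 isT; have := sep 0 2 isT; have := sep 0 3 isT.
have := sep 1 2 isT; have := sep 1 3 isT; have := sep 2 3 isT.
have := le 0 1; have := le 1 0; have := le 0 2; have := le 2 0; have := le 0 3; have := le 3 0.
have := le 1 2; have := le 2 1; have := le 1 3; have := le 3 1; have := le 2 3; have := le 3 2.
move: (x 0) (x 1) (x 2) (x 3) => a b c e.
move=> ? ? ? ? ? ? ? ? ? ? ? ?.
by rewrite !ltr_normr => /orP[] ? /orP[] ? /orP[] ? /orP[] ? /orP[] ? /orP[] ?; lra.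
Qed.

Lemma cos_lt_half_of_longest_side (r r' c : R) : 0 < r -> 0 < r' ->
  r ^+ 2 < r ^+ 2 + r' ^+ 2 - 2 * r * r' * c ->
  r' ^+ 2 < r ^+ 2 + r' ^+ 2 - 2 * r * r' * c -> c < 1 / 2.
Proof.
move=> r_gt0 r'_gt0 h h'.
suff : r * r' * c < r * r' * (1 / 2) by rewrite ltr_pM2l // mulr_gt0.
have [rr' | r'r] := leP r r'.
  have : r ^+ 2 <= r * r' by rewrite expr2 ler_pM2l.
  lra.
have : r' ^+ 2 <= r * r' by rewrite expr2 ler_pM2r // ltW.
lra.
Qed.

Lemma unit_dot_le_sum (ca sa cb sb : R) :
  ca ^+ 2 + sa ^+ 2 = 1 -> cb ^+ 2 + sb ^+ 2 = 1 -> sa * sb <= 0 -> 0 <= ca + cb ->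
  ca * cb + sa * sb <= ca + cb - 1.
Proof.
move=> ua ub sab cab.
have ca_le1 : ca <= 1 by nra.
have cb_le1 : cb <= 1 by nra.
have P_ge0 : 0 <= (1 - ca) * (1 - cb) by nra.
have sq_le : ((1 - ca) * (1 - cb)) ^+ 2 <= (- (sa * sb)) ^+ 2.
  have -> : (- (sa * sb)) ^+ 2 = (1 - ca) * (1 - cb) * ((1 + ca) * (1 + cb)).
    rewrite sqrrN exprMn -[sa ^+ 2](addKr (ca ^+ 2)) -[sb ^+ 2](addKr (cb ^+ 2)) ua ub.
    ring.
  rewrite expr2 ler_wpM2l //; lra.
rewrite ler_pXn2r ?nnegrE // in sq_le; lra.
Qed.

(* The left side is |A (ca, sa) + B (cb, sb) - (q, 0)|^2: two unit directions
   on opposite sides of the axis, at an angle of at least 2 pi / 3. *)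
Lemma obtuse_sum_lt_max (q A B ca sa cb sb : R) :
  0 < q -> q < A -> q < B -> ca ^+ 2 + sa ^+ 2 = 1 -> cb ^+ 2 + sb ^+ 2 = 1 ->
  sa * sb <= 0 -> 0 <= ca + cb -> ca * cb + sa * sb <= - (1 / 2) ->
  (A * ca + B * cb - q) ^+ 2 + (A * sa + B * sb) ^+ 2 < Num.max (A ^+ 2) (B ^+ 2).
Proof.
wlog BA : A B ca sa cb sb / B <= A.
  move=> wlog q0 qA qB ua ub sab cab C; have [BA|AB] := leP B A.
    exact: (wlog A B ca sa cb sb BA q0 qA qB ua ub sab cab C).
  rewrite maxC [A * ca + _]addrC [A * sa + _]addrC.
  apply: (wlog B A cb sb ca sa (ltW AB) q0 qB qA ub ua); first by rewrite mulrC.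
    by rewrite addrC.
  by rewrite mulrC [sb * _]mulrC.
move=> q0 qA qB ua ub sab cab C_le.
rewrite lt_max; apply/orP; left.
set C := ca * cb + sa * sb in C_le.
have C_le_sum : C <= ca + cb - 1 := unit_dot_le_sum ua ub sab cab.
have -> : (A * ca + B * cb - q) ^+ 2 + (A * sa + B * sb) ^+ 2 =
    A ^+ 2 * (ca ^+ 2 + sa ^+ 2) +
    (B ^+ 2 * (cb ^+ 2 + sb ^+ 2) + q ^+ 2 + 2 * A * B * C - 2 * q * (A * ca + B * cb)).
  by rewrite /C; ring.
rewrite ua ub !mulr1.
rewrite -[X in _ < X]addr0 ltrD2l.
have B_gt0 : 0 < B by lra.
rewrite -(pmulr_rlt0 _ B_gt0).
(* Three terms of known sign: the first uses C <= -1/2, the second C <= ca + cb - 1. *)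
have -> : B * (B ^+ 2 + q ^+ 2 + 2 * A * B * C - 2 * q * (A * ca + B * cb)) =
    (B - q) * (B ^+ 2 + 2 * A * B * C)
    + q * (2 * B * (B - A * ca - B * cb + A * C)) - q * B * (B - q) by ring.
have obtuse_le0 : (B - q) * (B ^+ 2 + 2 * A * B * C) <= 0.
  rewrite pmulr_rle0 ?subr_gt0 //.
  have -> : B ^+ 2 + 2 * A * B * C = A * B * (2 * C + 1) - B * (A - B) by ring.
  have : A * B * (2 * C + 1) <= 0 by rewrite pmulr_rle0 ?mulr_gt0 //; lra.
  have : 0 <= B * (A - B) by rewrite mulr_ge0 ?subr_ge0 // ltW.
  lra.
have dot_sum_le0 : q * (2 * B * (B - A * ca - B * cb + A * C)) <= 0.
  rewrite pmulr_rle0 // pmulr_rle0 ?mulr_gt0 //.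
  have cb_le1 : cb <= 1 by nra.
  nra.
have gap_gt0 : 0 < q * B * (B - q) by rewrite !mulr_gt0 // subr_gt0.
lra.
Qed.

Definition sqnorm z : R := z.1 ^+ 2 + z.2 ^+ 2.
Definition norm2 z : R := Num.sqrt (sqnorm z).
Definition polar r φ : R * R := (r * cos φ, r * sin φ).
Definition rot θ z : R * R := (z.1 * cos θ + z.2 * sin θ, z.2 * cos θ - z.1 * sin θ).

Lemma sqnorm_ge0 z : 0 <= sqnorm z.
Proof. by rewrite addr_ge0 ?sqr_ge0. Qed.

Lemma norm2_ge0 z : 0 <= norm2 z.
Proof. exact: sqrtr_ge0. Qed.

Lemma sqr_norm2 z : norm2 z ^+ 2 = sqnorm z.
Proof. exact/sqr_sqrtr/sqnorm_ge0. Qed.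

Lemma sqr_le_sqnorm r z : 0 <= r -> r <= norm2 z -> r ^+ 2 <= sqnorm z.
Proof. by move=> r_ge0 h; rewrite -sqr_norm2 ler_pXn2r // nnegrE norm2_ge0. Qed.

Lemma sqnorm_eq0 z : (sqnorm z == 0) = (z == 0).
Proof.
by case: z => a b; rewrite /sqnorm paddr_eq0 ?sqr_ge0 // !sqrf_eq0 xpair_eqE.
Qed.

Lemma norm2_gt0 z : (0 < norm2 z) = (z != 0).
Proof. by rewrite sqrtr_gt0 lt0r sqnorm_eq0 sqnorm_ge0 andbT. Qed.

Lemma sqnorm_polar r φ : sqnorm (polar r φ) = r ^+ 2.
Proof. by rewrite /sqnorm /= !exprMn -mulrDr cos2Dsin2 mulr1. Qed.

Lemma sqnorm_polarB r r' φ φ' :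
  sqnorm (polar r φ - polar r' φ') = r ^+ 2 + r' ^+ 2 - 2 * r * r' * cos (φ - φ').
Proof.
have -> : sqnorm (polar r φ - polar r' φ') = sqnorm (polar r φ) + sqnorm (polar r' φ')
    - 2 * (r * cos φ * (r' * cos φ') + r * sin φ * (r' * sin φ')).
  by rewrite /sqnorm /=; ring.
by rewrite !sqnorm_polar cosB; ring.
Qed.

Lemma polar_norm2 z : exists2 φ, 0 <= φ <= pi *+ 2 & z = polar (norm2 z) φ.
Proof.
have pi_gt0 := pi_gt0 R.
have [-> | z_neq0] := eqVneq z 0.
  exists 0; first by rewrite lexx pmulrn_rge0 // ltW.
  by rewrite /polar /norm2 /sqnorm /= expr0n addr0 sqrtr0 !mul0r.
have r_gt0 : 0 < norm2 z by rewrite norm2_gt0.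
set r := norm2 z in r_gt0 *.
pose c := z.1 / r; pose s := z.2 / r.
have cs1 : c ^+ 2 + s ^+ 2 = 1.
  by rewrite /c /s !expr_div_n -mulrDl -/(sqnorm z) -sqr_norm2 divff // sqrf_eq0 gt_eqF.
have c_bound : -1 <= c <= 1.
  rewrite -ler_norml -(ler_pXn2r (_ : 0 < 2)%N) ?nnegrE // expr1n real_normK ?num_real //.
  by have := sqr_ge0 s; lra.
have [sin_acos_c cos_acos_c] : sin (acos c) = `|s| /\ cos (acos c) = c.
  by rewrite sin_acos // -sqrtr_sqr acosK ?in_itv //; split => //; congr Num.sqrt; lra.
have [acos_ge0 acos_le_pi] := andP (proj1 (acos_def c_bound)).
have zE : z = (r * c, r * s).
  by rewrite /c /s ![r * _]mulrC !divfK ?gt_eqF //; exact: surjective_pairing.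
have [s_ge0 | s_lt0] := leP 0 s.
  exists (acos c); first by apply/andP; split => //; rewrite mulr2n; lra.
  by rewrite zE /polar cos_acos_c sin_acos_c ger0_norm.
exists (pi *+ 2 - acos c); first by apply/andP; split; rewrite mulr2n; lra.
rewrite zE /polar addrC cosD2pi sinD2pi cosN sinN cos_acos_c sin_acos_c.
by rewrite ltr0_norm ?opprK.
Qed.

Lemma rotD θ z w : rot θ (z + w) = rot θ z + rot θ w.
Proof. by apply/pair_equal_spec; split => /=; ring. Qed.

Lemma rotB θ z w : rot θ (z - w) = rot θ z - rot θ w.
Proof. by apply/pair_equal_spec; split => /=; ring. Qed.

Lemma sqnorm_rot θ z : sqnorm (rot θ z) = sqnorm z.
Proof.
rewrite /sqnorm /= -[z.1 ^+ 2]mulr1 -[z.2 ^+ 2]mulr1 -(cos2Dsin2 θ); ring.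
Qed.

Lemma norm2_rot θ z : norm2 (rot θ z) = norm2 z.
Proof. by rewrite /norm2 sqnorm_rot. Qed.

Lemma rot_polar r θ : rot θ (polar r θ) = polar r 0.
Proof.
apply/pair_equal_spec; split=> /=; rewrite ?cos0 ?sin0 ?mulr0 ?mulr1; last by ring.
by rewrite -!mulrA -!expr2 -mulrDr cos2Dsin2 mulr1.
Qed.

Lemma polar_configuration_absurd (a m : R) (r φ : 'I_4 -> R) :
  0 < a -> (forall k, a < r k < m) -> (forall k, 0 <= φ k <= pi *+ 2) ->
  (forall k, m ^+ 2 <= sqnorm (polar (r k) (φ k) - polar a 0)) ->
  (forall i j, i != j -> m ^+ 2 <= sqnorm (polar (r i) (φ i) - polar (r j) (φ j))) ->
  (forall i j, i != j ->
     r i ^+ 2 <= sqnorm (polar (r i) (φ i) + polar (r j) (φ j) - polar a 0)) ->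
  False.
Proof.
move=> a_gt0 r_bound φ_bound far0 far far_sum.
have pi_gt0 := pi_gt0 R.
have r_gt0 k : 0 < r k by have := r_bound k; lra.
have r_lt_m k : r k ^+ 2 < m ^+ 2.
  by rewrite ltr_pXn2r ?nnegrE ?ltW //; have := r_bound k; lra.
have φ_range k : pi / 3 < φ k < pi * 5 / 3.
  have [a_lt _] := andP (r_bound k).
  have a_lt2 : a ^+ 2 < r k ^+ 2 by rewrite ltr_pXn2r ?nnegrE ?ltW.
  have := far0 k; rewrite sqnorm_polarB subr0 => h.
  have [φ_ge0 φ_le] := andP (φ_bound k).
  rewrite -[φ k]ger0_norm //; apply: cos_lt_half_norm; first by rewrite ger0_norm.
  by apply: (cos_lt_half_of_longest_side (r_gt0 k) a_gt0); have := r_lt_m k; lra.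
have φ_sep i j : i != j -> pi / 3 < `|φ i - φ j|.
  move=> ij; have := far i j ij; rewrite sqnorm_polarB => h.
  suff /andP[] : pi / 3 < `|φ i - φ j| < pi * 5 / 3 by [].
  apply: cos_lt_half_norm.
    by rewrite ler_norml; have := φ_bound i; have := φ_bound j; rewrite mulr2n; lra.
  apply: (cos_lt_half_of_longest_side (r_gt0 i) (r_gt0 j)).
    by have := r_lt_m i; lra.
  by have := r_lt_m j; lra.
have [i [j φij]] := four_points_spread φ_sep.
(* Point i lies above the axis of [polar a 0] and point j below it, and the
   angle between them that contains this axis is less than pi. *)
have ij : i != j by apply: contraTneq φij => ->; rewrite subrr; lra.
have := φ_range i; have := φ_range j => /andP[φj_lo φj_hi] /andP[φi_lo φi_hi].
have sin_i : 0 <= sin (φ i) by apply: sin_ge0_pi; apply/andP; split; lra.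
have sin_j : sin (φ j) <= 0.
  rewrite -[φ j](subrK pi) sinDpi oppr_le0; apply: sin_ge0_pi; apply/andP; split; lra.
have cos_sum : 0 <= cos (φ i) + cos (φ j).
  have φi_itv : φ i \in `[0, pi] by rewrite in_itv /=; apply/andP; split; lra.
  have φj_itv : φ j - pi \in `[0, pi] by rewrite in_itv /=; apply/andP; split; lra.
  by rewrite -[φ j](subrK pi) cosDpi subr_ge0 ltW // ltr_cos //; lra.
have cos_ij : cos (φ i) * cos (φ j) + sin (φ i) * sin (φ j) <= - (1 / 2).
  rewrite -cosB -cosN opprB -[φ j - φ i](subrK pi) cosDpi lerN2.
  by apply: cos_ge_half; rewrite ler_norml; lra.
have := obtuse_sum_lt_max a_gt0 (proj1 (andP (r_bound i))) (proj1 (andP (r_bound j)))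
  (cos2Dsin2 _) (cos2Dsin2 _) (mulr_ge0_le0 sin_i sin_j) cos_sum cos_ij.
have ji : j != i by rewrite eq_sym.
have := far_sum j i ji; have := far_sum i j ij; rewrite [polar (r j) _ + _]addrC.
rewrite /sqnorm /= cos0 sin0 mulr1 mulr0 !subr0 lt_max => hi hj /orP[]; lra.
Qed.

Lemma planar_configuration_absurd (m : R) (z0 : R * R) (z : 'I_4 -> R * R) :
  0 < norm2 z0 -> (forall k, norm2 z0 < norm2 (z k) < m) ->
  (forall k, m <= norm2 (z k - z0)) ->
  (forall i j, i != j -> m <= norm2 (z i - z j)) ->
  (forall i j, i != j -> norm2 (z i) <= norm2 (z i + z j - z0)) ->
  False.
Proof.
move=> z0_gt0 z_bound far0 far far_sum.
have [θ _ z0E] := polar_norm2 z0.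
have z0R : rot θ z0 = polar (norm2 z0) 0 by rewrite {1}z0E rot_polar.
have /fin_all_exists2[φ φ_bound zR] : forall k, exists2 φ,
    0 <= φ <= pi *+ 2 & rot θ (z k) = polar (norm2 (z k)) φ.
  by move=> k; rewrite -(norm2_rot θ); apply: polar_norm2.
have m_ge0 : 0 <= m by have := z_bound 0; have := norm2_ge0 (z 0); lra.
apply: (@polar_configuration_absurd (norm2 z0) m (fun k => norm2 (z k)) φ) => //.
- by move=> k; rewrite -zR -z0R -rotB sqnorm_rot sqr_le_sqnorm.
- by move=> i j ij; rewrite -!zR -rotB sqnorm_rot sqr_le_sqnorm ?far.
- move=> i j ij; rewrite -!zR -z0R -rotD -rotB sqnorm_rot.
  by rewrite sqr_le_sqnorm ?norm2_ge0 ?far_sum.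
Qed.

End Plane.

Local Open Scope classical_set_scope.

Section LatticeWindows.
Variables (R : realType) (M : 'M[R]_3).
Implicit Types (x y : 'rV[R]_3) (r s : R).

Definition vpart x : R * R := (x ord0 (inord 1), x ord0 (inord 2)).

Lemma vnormE x : vnorm x = norm2 (vpart x).
Proof. by []. Qed.

Lemma vpartD x y : vpart (x + y) = vpart x + vpart y.
Proof. by rewrite /vpart !mxE. Qed.

Lemma vpartB x y : vpart (x - y) = vpart x - vpart y.
Proof. by rewrite /vpart !mxE. Qed.

Lemma ucoordD x y : ucoord (x + y) = ucoord x + ucoord y.
Proof. by rewrite /ucoord mxE. Qed.

Lemma ucoordB x y : ucoord (x - y) = ucoord x - ucoord y.
Proof. by rewrite /ucoord !mxE. Qed.

Lemma ucoordN x : ucoord (- x) = - ucoord x.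
Proof. by rewrite /ucoord mxE. Qed.

Lemma v_nonzeroE x : v_nonzero x <-> vpart x != 0.
Proof.
rewrite /v_nonzero /vpart xpair_eqE negb_and.
split; first by case=> /eqP ->; rewrite ?orbT.
by case/orP=> /eqP; [left | right].
Qed.

Lemma vnormN x : vnorm (- x) = vnorm x.
Proof. by rewrite /vnorm !mxE !sqrrN. Qed.

Lemma v_nonzeroN x : v_nonzero (- x) <-> v_nonzero x.
Proof. by rewrite !v_nonzeroE /vpart !mxE xpair_eqE !oppr_eq0 -xpair_eqE. Qed.

Lemma latticeD x y : lattice M x -> lattice M y -> lattice M (x + y).
Proof.
move=> [a ->] [b ->]; exists (a + b); rewrite -mulmxDl; congr (_ *m _).
by apply/matrixP => i j; rewrite !mxE intrD.
Qed.

Lemma latticeN x : lattice M x -> lattice M (- x).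
Proof.
move=> [a ->]; exists (- a); rewrite -mulNmx; congr (_ *m _).
by apply/matrixP => i j; rewrite !mxE intrN.
Qed.

Lemma latticeB x y : lattice M x -> lattice M y -> lattice M (x - y).
Proof. by move=> Lx Ly; apply/latticeD/latticeN. Qed.

Definition window s : set 'rV[R]_3 :=
  [set x | lattice M x /\ 0 <= ucoord x < s /\ v_nonzero x].

Definition least_vnorm (A : set 'rV[R]_3) r : Prop :=
  (exists2 x, A x & vnorm x = r) /\ (forall x, A x -> r <= vnorm x).

Lemma least_vnorm_sym (A B : set 'rV[R]_3) r :
  (forall x, A x -> B x \/ B (- x)) -> (forall x, B x -> A x \/ A (- x)) ->
  least_vnorm A r -> least_vnorm B r.
Proof.
move=> AB BA [[x Ax <-] x_least]; split.
  by have [Bx | Bx] := AB x Ax; [exists x | exists (- x); rewrite ?vnormN].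
by move=> y /BA[Ay | Ay]; [|rewrite -(vnormN y)]; apply: x_least.
Qed.

Lemma Fvalues_window r :
  Fvalues M r -> exists2 s, 1 / 2 <= s < 1 & least_vnorm (window s) r.
Proof.
move=> [t [/andP[t_gt0 t_lt1] Ft]].
(* The lattice is symmetric, so the window (-t, 1 - t) folds onto [0, max(t, 1 - t)). *)
have t_le : t <= Num.max t (1 - t) by rewrite le_max lexx.
have t'_le : 1 - t <= Num.max t (1 - t) by rewrite le_max lexx orbT.
exists (Num.max t (1 - t)).
  by rewrite le_max gt_max; apply/andP; split; [apply/orP | apply/andP]; lra.
apply: (least_vnorm_sym _ _ Ft) => x [Lx [/andP[u_lo u_hi] nz]].
  have [u_ge0 | u_lt0] := leP 0 (ucoord x).
    by left; split; last split; rewrite ?u_ge0 //=; lra.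
  right; split; first exact: latticeN.
  by rewrite ucoordN v_nonzeroN; split => //; apply/andP; split; lra.
have [u_lt | u_ge] := ltP (ucoord x) (1 - t).
  by left; split; last split; rewrite //; apply/andP; split; lra.
right; split; first exact: latticeN.
rewrite ucoordN v_nonzeroN; split => //.
move: u_hi; rewrite lt_max => /orP[] ?; apply/andP; split; lra.
Qed.

End LatticeWindows.

Section SixMinima.
Variables (R : realType) (M : 'M[R]_3) (r s : nat -> R) (w : nat -> 'rV[R]_3).
Hypothesis r_incr : forall i j, (i < j <= 5)%N -> r i < r j.
Hypothesis s_bound : forall k, (k <= 5)%N -> 1 / 2 <= s k < 1.
Hypothesis w_window : forall k, (k <= 5)%N -> window M (s k) (w k).
Hypothesis w_vnorm : forall k, (k <= 5)%N -> vnorm (w k) = r k.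
Hypothesis w_least : forall k y, (k <= 5)%N -> window M (s k) y -> r k <= vnorm y.

Lemma window_decr j k : (j < k <= 5)%N -> s k <= ucoord (w j).
Proof.
move=> /andP[jk k5]; have j5 : (j <= 5)%N by lia.
have [Lj [/andP[uj_ge0 _] nzj]] := w_window j5.
rewrite leNgt; apply/negP => uj_lt.
have Wj : window M (s k) (w j) by split; last split; rewrite ?uj_ge0 ?uj_lt.
have := w_least k5 Wj; rewrite w_vnorm //.
have : r j < r k by apply: r_incr; lia.
lra.
Qed.

Lemma ucoord_ge_half k : (k <= 4)%N -> 1 / 2 <= ucoord (w k).
Proof.
move=> k4; have /andP[s5_ge _] := s_bound (leqnn 5).
have : s 5 <= ucoord (w k) by apply: window_decr; lia.
lra.
Qed.

Lemma ucoord_lt1 k : (k <= 5)%N -> ucoord (w k) < 1.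
Proof.
by move=> k5; have [_ [/andP[_ ?] _]] := w_window k5; have /andP[_ ?] := s_bound k5; lra.
Qed.

Lemma vnormB_ge_r5 i j : (i <= 4)%N -> (j <= 4)%N -> i != j -> r 5 <= vnorm (w i - w j).
Proof.
wlog ij : i j / (i < j)%N.
  move=> wlog i4 j4 ij_neq; have [ij | ji | ij_eq] := ltngtP i j.
  - exact: wlog.
  - by rewrite -vnormN opprB wlog // eq_sym.
  - by rewrite ij_eq eqxx in ij_neq.
move=> i4 j4 _; have i5 : (i <= 5)%N by lia.
have j5 : (j <= 5)%N by lia.
have [Li [/andP[_ ui_lt] _]] := w_window i5.
have [Lj [/andP[_ uj_lt] _]] := w_window j5.
have uij : s j <= ucoord (w i) by apply: window_decr; lia.
have uj_ge := ucoord_ge_half j4; have ui_lt1 := ucoord_lt1 i5.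
have /andP[s5_ge _] := s_bound (leqnn 5).
have [vpart0 | vpart_neq0] := eqVneq (vpart (w i - w j)) 0.
  move/eqP: vpart0; rewrite vpartB subr_eq0 => /eqP vpart_ij.
  have := w_vnorm i5; have := w_vnorm j5; rewrite !vnormE vpart_ij => -> rij.
  have : r i < r j by apply: r_incr; lia.
  by rewrite rij ltxx.
apply: w_least (leqnn 5) _; split; first exact: latticeB.
by split; [rewrite ucoordB; apply/andP; split; lra | exact/v_nonzeroE].
Qed.

Lemma vnormDB_ge i j : (0 < i)%N -> (i < j <= 4)%N -> r j <= vnorm (w i + w j - w 0).
Proof.
move=> i_gt0 /andP[ij j4]; have i4 : (i <= 4)%N by lia.
have i5 : (i <= 5)%N by lia.
have j5 : (j <= 5)%N by lia.
have [vpart0 | vpart_neq0] := eqVneq (vpart (w i + w j - w 0)) 0.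
  move/eqP: vpart0; rewrite vpartB vpartD subr_eq0 => /eqP vpart_sum.
  have i_neq0 : 0 != i by rewrite eq_sym -lt0n.
  have := vnormB_ge_r5 (isT : (0 <= 4)%N) i4 i_neq0.
  rewrite vnormE vpartB -vpart_sum [vpart (w i) + _]addrC addrK -vnormE w_vnorm //.
  have : r j < r 5 by apply: r_incr; lia.
  lra.
have [L0 [/andP[_ u0_lt] _]] := w_window (isT : (0 <= 5)%N).
have [Li [/andP[_ ui_lt] _]] := w_window i5.
have [Lj [/andP[_ uj_lt] _]] := w_window j5.
have u0i : s i <= ucoord (w 0) by apply: window_decr; lia.
have ui_ge := ucoord_ge_half i4; have uj_ge := ucoord_ge_half j4.
have u0_lt1 := ucoord_lt1 (isT : (0 <= 5)%N).
apply: w_least j5 _; split; first by apply: latticeB => //; apply: latticeD.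
by split; [rewrite ucoordB ucoordD; apply/andP; split; lra | exact/v_nonzeroE].
Qed.

Lemma six_minima_absurd : False.
Proof.
have [_ [_ nz0]] := w_window (isT : (0 <= 5)%N).
apply: (@planar_configuration_absurd R (r 5) (vpart (w 0)) (fun k : 'I_4 => vpart (w k.+1))).
- by rewrite norm2_gt0 -v_nonzeroE.
- move=> k; have k4 := ltn_ord k.
  rewrite -!vnormE !w_vnorm; [|lia..].
  by apply/andP; split; apply: r_incr; lia.
- by move=> k; have k4 := ltn_ord k; rewrite -vpartB -vnormE vnormB_ge_r5.
- move=> i j ij; have i4 := ltn_ord i; have j4 := ltn_ord j.
  by rewrite -vpartB -vnormE vnormB_ge_r5.
move=> i j ij; have i4 := ltn_ord i; have j4 := ltn_ord j.
rewrite -vpartD -vpartB -!vnormE w_vnorm; last by lia.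
have [lt_ij | lt_ji | eq_ij] := ltngtP i j.
- apply: le_trans (vnormDB_ge _ _) => //; last by lia.
  by apply/ltW/r_incr; lia.
- by rewrite [w i.+1 + _]addrC vnormDB_ge //; lia.
- by move: ij; rewrite -val_eqE /= eq_ij eqxx.
Qed.

End SixMinima.

Lemma Fvalues_no_six (R : realType) (M : 'M[R]_3) (r : nat -> R) :
  (forall k, (k <= 5)%N -> Fvalues M (r k)) ->
  (forall i j, (i < j <= 5)%N -> r i < r j) -> False.
Proof.
move=> Fr r_incr.
have /choice[sw sw_least] : forall k, exists sw : R * 'rV[R]_3, (k <= 5)%N ->
    [/\ 1 / 2 <= sw.1 < 1, window M sw.1 sw.2, vnorm sw.2 = r k
      & forall y, window M sw.1 y -> r k <= vnorm y].
  move=> k; have [k5 | _] := leqP k 5; last by exists (0, 0).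
  by have [s s_bound [[x Wx xr] x_least]] := Fvalues_window (Fr k k5); exists (s, x).
apply: (@six_minima_absurd R M r (fun k => (sw k).1) (fun k => (sw k).2)) => //.
- by move=> k /sw_least[].
- by move=> k /sw_least[].
- by move=> k /sw_least[].
- by move=> k y /sw_least[_ _ _]; apply.
Qed.

Local Open Scope card_scope.

Lemma card_le_II_fset (T : choiceType) (A : set T) (n : nat) :
  (forall B : {fset T}, [set` B] `<=` A -> (#|` B| <= n)%N) -> A #<= `I_n.
Proof.
move=> B_le.
have Afin : finite_set A.
  apply: contrapT => Ainf.
  have [B BA B_gt] := infinite_set_fset n.+1 Ainf.
  by have := B_le B BA; rewrite leqNgt B_gt.
have /finite_setP[k Ak] := Afin.
apply: (card_le_trans (proj1 (proj1 (card_eqPle _ _) Ak))); rewrite card_le_II.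
by rewrite -(card_fset_set Ak); apply: B_le => x /=; rewrite (in_fset_set Afin) => /set_mem.
Qed.

Lemma Fvalues_fset_card (R : realType) (M : 'M[R]_3) (B : {fset R}) :
  [set` B] `<=` Fvalues M -> (#|` B| <= 5)%N.
Proof.
move=> BF; rewrite leqNgt; apply/negP => B_gt5.
pose s := sort <=%O (enum_fset B).
have s_sorted : sorted <%O s by rewrite /s sort_lt_sorted; exact: fset_uniq.
have s_size : size s = #|` B| by rewrite /s size_sort.
apply: (@Fvalues_no_six R M (nth 0 s)).
  move=> k k5; apply: BF => /=.
  have : nth 0 s k \in s by apply: mem_nth; rewrite s_size; apply: leq_ltn_trans B_gt5.
  by rewrite /s mem_sort.
move=> i j /andP[ij j5].
apply: (sorted_ltn_nth lt_trans) => //; rewrite inE s_size.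
  by apply: leq_ltn_trans B_gt5; apply: leq_trans (ltnW ij) j5.
by apply: leq_ltn_trans B_gt5.
Qed.

Theorem theorem5p1 (R : realType) (M : 'M[R]_3) :
  \det M = 1 -> Fvalues M #<= `I_5.
Proof.
by move=> _; apply: card_le_II_fset => B; apply: Fvalues_fset_card.
Qed.
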